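(* For every nonnegative integer $n$, $$\sum_{k=0}^{\infty}(-1)^k(4k+1)\,\frac{(-n)_k\,(-2n-\tfrac12)_k\,(\tfrac12)_k}{k!\,(n+\tfrac32)_k\,(2n+2)_k}=\left(\frac{2^2}{3^3}\right)^n\frac{(\tfrac32)_n^2}{(\tfrac43)_n(\tfrac23)_n}.$$ (The sum is finite, since $(-n)_k=0$ for $k>n$.)
   Context: $(a)_j=\Gamma(a+j)/\Gamma(a)=a(a+1)\cdots(a+j-1)$ denotes the rising factorial (Pochhammer symbol), with $(a)_0=1$. *)

From HB Require Import structures.
From mathcomp Require Import all_boot all_order all_algebra.
Set Implicit Arguments. Unset Strict Implicit. Unset Printing Implicit Defensive.
Import Order.TTheory GRing.Theory Num.Theory.
Local Open Scope ring_scope.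

Definition poch (a : rat) (j : nat) : rat := \prod_(i < j) (a + i%:R).

From HB Require Import structures.
From mathcomp Require Import all_boot all_order all_algebra.
From mathcomp Require Import ring lra.
Import Order.TTheory GRing.Theory Num.Theory.
Local Open Scope ring_scope.

(* Proof by the Wilf-Zeilberger method.

   Write F(n,k) for the k-th summand and S(n) = sum_k F(n,k); since
   (-n)_k = 0 for k > n, only 0 <= k <= n contributes.  Both F(n,k) and
   F(n+1,k) are rational multiples (in n and k) of one hypergeometric term
   h(n+1,k), where h(m,k) is F(m,k) without its factor (4k+1).  With the
   explicit certificate G(n,k) = h(n+1,k) Q(n,k), a single identity between
   rational functions gives the telescoping relation
     3(3n+4)(3n+2) F(n+1,k) - (2n+3)^2 F(n,k) = G(n,k+1) - G(n,k).
   Summing over k (G vanishes at both ends) yields the first-order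
   recurrence 3(3n+4)(3n+2) S(n+1) = (2n+3)^2 S(n), which the right-hand
   side also satisfies; S(0) = 1 and induction conclude. *)

(* The nonzero-denominator conditions left by [field] are, throughout, linear
   in quantities known to be positive or nonnegative, so [lra] closes them. *)
Ltac field_lra := field; repeat (apply/andP; split); apply/eqP; lra.

Lemma poch0 (a : rat) : poch a 0 = 1.
Proof. by rewrite /poch big_ord0. Qed.

Lemma pochS (a : rat) (k : nat) : poch a k.+1 = poch a k * (a + k%:R).
Proof. by rewrite /poch big_ord_recr. Qed.

Lemma poch_gt0 (a : rat) (k : nat) : 0 < a -> 0 < poch a k.
Proof.
move=> a_gt0; apply: prodr_gt0 => i _.
by apply: ltr_wpDr; [exact: ler0n | exact: a_gt0].
Qed.

Lemma poch_neg_nat (n k : nat) : (n < k)%N -> poch (- n%:R) k = 0.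
Proof.
elim: k => [|k IHk] //; rewrite ltnS leq_eqVlt => /orP[/eqP -> | n_lt_k].
- by rewrite pochS addNr mulr0.
- by rewrite pochS IHk // mul0r.
Qed.

Lemma poch_shift (a : rat) (k : nat) : a * poch (a + 1) k = poch a k * (a + k%:R).
Proof.
elim: k => [|k IHk]; first by rewrite !poch0 addr0 mulr1 mul1r.
by rewrite !pochS mulrA IHk -!mulrA; congr (_ * _); ring.
Qed.

(* The two directions in which [poch_shift] is used to trade a parameter for
   its neighbour; the parameter b = a + 1 is given by an equation so that the
   lemmas rewrite terms written in any form. *)
Lemma poch_param_up (a b : rat) (k : nat) :
  b = a + 1 -> a != 0 -> poch b k = poch a k * (a + k%:R) / a.
Proof. by move=> -> a_neq0; rewrite -poch_shift mulrAC mulfV // mul1r. Qed.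

Lemma poch_param_down (a b : rat) (k : nat) :
  b = a + 1 -> a + k%:R != 0 -> poch a k = a * poch b k / (a + k%:R).
Proof. by move=> -> ak_neq0; rewrite poch_shift mulfK. Qed.

Lemma sum_vanishing_tail {V : nmodType} (F : nat -> V) {n N : nat} :
  (n <= N)%N -> (forall k, (n < k)%N -> F k = 0) ->
  \sum_(k < N.+1) F k = \sum_(k < n.+1) F k.
Proof.
move=> n_le_N F_tail; rewrite -!(big_mkord xpredT) (big_cat_nat (leq0n n.+1)) //=.
rewrite [X in _ + X]big_nat_cond [X in _ + X]big1 ?addr0 // => k /andP[/andP[n_lt_k _] _].
exact: F_tail.
Qed.

(* In the variables
   x = n, y = k: [summand_ratio] is F(n,k) / ((4k+1) h(n+1,k)),
   [hterm_ratio] is h(n+1,k+1) / h(n+1,k), and [cert_factor] is Q(n,k). *)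

Section RationalIdentity.
Context {R : realFieldType}.
Implicit Types x y : R.

Definition summand_ratio x y : R :=
  (x+1-y)*(2*x+5/2-y)*(2*x+3/2-y)*(x+3/2+y)*(2*x+2+y)*(2*x+3+y)
  / ((x+1)*(2*x+5/2)*(2*x+3/2)*(x+3/2)*(2*x+2)*(2*x+3)).

Definition hterm_ratio x y : R :=
  - ((y-x-1)*(y-2*x-5/2)*(y+1/2)) / ((y+1)*(y+x+5/2)*(y+2*x+4)).

Definition cert_factor x y : R :=
  y*(y+x+3/2)*(y+2*x+3)
  * (-4*(x+1)*(92*x^+3+237*x^+2+197*x+53) - 2*(22*x^+2+38*x+17)*y
     + 2*(44*x^+2+76*x+33)*y^+2 + 8*y^+3 - 8*y^+4)
  / ((x+1)^+2*(4*x+5)*(4*x+3)).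

Lemma wz_rational_identity {x y} : 0 <= x -> 0 <= y ->
  3*(3*x+4)*(3*x+2)*(4*y+1) - (2*x+3)^+2*(4*y+1)*summand_ratio x y
  = hterm_ratio x y * cert_factor x (y+1) - cert_factor x y.
Proof. by move=> x_ge0 y_ge0; rewrite /summand_ratio /hterm_ratio /cert_factor; field_lra. Qed.

End RationalIdentity.

Definition summand (n k : nat) : rat :=
  (-1) ^+ k * (4 * k%:R + 1) *
  (poch (- n%:R) k * poch (- 2 * n%:R - 1 / 2) k * poch (1 / 2) k)
  / ((k`!)%:R * poch (n%:R + 3 / 2) k * poch (2 * n%:R + 2) k).

Definition hterm (n k : nat) : rat :=
  (-1) ^+ k *
  (poch (- n%:R) k * poch (- 2 * n%:R - 1 / 2) k * poch (1 / 2) k)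
  / ((k`!)%:R * poch (n%:R + 3 / 2) k * poch (2 * n%:R + 2) k).

Lemma summand_hterm (n k : nat) : summand n k = (4 * k%:R + 1) * hterm n k.
Proof. by rewrite /summand /hterm; ring. Qed.

Lemma hterm_vanishing (n k : nat) : (n < k)%N -> hterm n k = 0.
Proof. by move=> n_lt_k; rewrite /hterm poch_neg_nat // !(mul0r, mulr0). Qed.

Lemma hterm_succ (n k : nat) :
  hterm n.+1 k.+1 = hterm n.+1 k * hterm_ratio n%:R k%:R.
Proof.
have n_ge0 := ler0n rat n; have k_ge0 := ler0n rat k.
have fact_gt0 : 0 < (k`!)%:R :> rat by rewrite ltr0n fact_gt0.
have poch1_gt0 : 0 < poch (n.+1%:R + 3/2) k by apply: poch_gt0; lra.
have poch2_gt0 : 0 < poch (2 * n.+1%:R + 2) k by apply: poch_gt0; lra.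
rewrite /hterm /hterm_ratio !pochS factS natrM exprS.
field_lra.
Qed.

(* Consecutive terms in n: each parameter of h(n,k) differs by one from the
   corresponding parameter of h(n+1,k), so the quotient is rational in n, k. *)
Lemma hterm_pred (n k : nat) :
  hterm n k = hterm n.+1 k * summand_ratio n%:R k%:R.
Proof.
have n_ge0 := ler0n rat n; have k_ge0 := ler0n rat k.
have fact_gt0 : 0 < (k`!)%:R :> rat by rewrite ltr0n fact_gt0.
have poch1_gt0 : 0 < poch (n.+1%:R + 3/2) k by apply: poch_gt0; lra.
have poch2_gt0 : 0 < poch (2 * n.+1%:R + 2) k by apply: poch_gt0; lra.
rewrite /hterm /summand_ratio.
rewrite (@poch_param_up (- n.+1%:R) (- n%:R)); [|lra|apply/eqP; lra].
rewrite (@poch_param_up (- 2 * n%:R - 3/2) (- 2 * n%:R - 1/2)); [|lra|apply/eqP; lra].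
rewrite (@poch_param_up (- 2 * n.+1%:R - 1/2) (- 2 * n%:R - 3/2)); [|lra|apply/eqP; lra].
rewrite (@poch_param_down (n%:R + 3/2) (n.+1%:R + 3/2)); [|lra|apply/eqP; lra].
rewrite (@poch_param_down (2 * n%:R + 2) (2 * n%:R + 3)); [|lra|apply/eqP; lra].
rewrite (@poch_param_down (2 * n%:R + 3) (2 * n.+1%:R + 2)); [|lra|apply/eqP; lra].
field_lra.
Qed.

Lemma summand_vanishing (n k : nat) : (n < k)%N -> summand n k = 0.
Proof. by move=> n_lt_k; rewrite summand_hterm hterm_vanishing ?mulr0. Qed.

Definition cert (n k : nat) : rat := hterm n.+1 k * cert_factor n%:R k%:R.

Lemma wz_telescoping (n k : nat) :
  3 * (3 * n%:R + 4) * (3 * n%:R + 2) * summand n.+1 k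
    - (2 * n%:R + 3) ^+ 2 * summand n k
  = cert n k.+1 - cert n k.
Proof.
rewrite /cert !summand_hterm (hterm_pred n k) hterm_succ -[k.+1%:R]natr1.
have identity := wz_rational_identity (ler0n rat n) (ler0n rat k).
set h := hterm n.+1 k; set x := n%:R; set y := k%:R.
transitivity (h * (3*(3*x+4)*(3*x+2)*(4*y+1) - (2*x+3)^+2*(4*y+1)*summand_ratio x y)).
  by ring.
by rewrite identity; ring.
Qed.

Definition series (n : nat) : rat := \sum_(k < n.+1) summand n k.

Lemma series_recurrence (n : nat) :
  3 * (3 * n%:R + 4) * (3 * n%:R + 2) * series n.+1 = (2 * n%:R + 3) ^+ 2 * series n.
Proof.
apply/eqP; rewrite -subr_eq0; apply/eqP.
rewrite /series -(sum_vanishing_tail (summand n) (leqnSn n) (@summand_vanishing n)).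
rewrite !mulr_sumr -sumrB (eq_bigr (fun k : 'I_n.+2 => cert n k.+1 - cert n k)) => [|k _];
  last exact: wz_telescoping.
rewrite -(big_mkord xpredT (fun k => cert n k.+1 - cert n k)) telescope_sumr //.
have cert_top : cert n n.+2 = 0 by rewrite /cert hterm_vanishing ?mul0r.
have cert_bottom : cert n 0 = 0 by rewrite /cert /cert_factor !mul0r mulr0.
by rewrite cert_top cert_bottom subrr.
Qed.

Definition closed_form (n : nat) : rat :=
  (2 ^+ 2 / 3 ^+ 3) ^+ n * (poch (3 / 2) n) ^+ 2 / (poch (4 / 3) n * poch (2 / 3) n).

Lemma closed_form_recurrence (n : nat) :
  3 * (3 * n%:R + 4) * (3 * n%:R + 2) * closed_form n.+1
  = (2 * n%:R + 3) ^+ 2 * closed_form n.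
Proof.
have n_ge0 := ler0n rat n.
have poch43_gt0 : 0 < poch (4/3) n by apply: poch_gt0.
have poch23_gt0 : 0 < poch (2/3) n by apply: poch_gt0.
by rewrite /closed_form !pochS exprS; field_lra.
Qed.

Lemma series_closed_form (n : nat) : series n = closed_form n.
Proof.
elim: n => [|n IHn].
  by rewrite /series /closed_form big_ord1 /summand !poch0 !expr0 fact0 /=; field.
have n_ge0 := ler0n rat n.
have coef_neq0 : 3 * (3 * n%:R + 4) * (3 * n%:R + 2) != 0 :> rat by apply: lt0r_neq0; nra.
by apply: (mulfI coef_neq0); rewrite series_recurrence IHn closed_form_recurrence.
Qed.

Theorem theorem2 (n N : nat) (hN : (n <= N)%N) :
  \sum_(k < N.+1)
     (-1) ^+ k * (4 * k%:R + 1) *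
     (poch (- n%:R) k * poch (- 2 * n%:R - 1 / 2) k * poch (1 / 2) k)
     / ((k`!)%:R * poch (n%:R + 3 / 2) k * poch (2 * n%:R + 2) k)
  = (2 ^+ 2 / 3 ^+ 3) ^+ n * (poch (3 / 2) n) ^+ 2
      / (poch (4 / 3) n * poch (2 / 3) n) :> rat.
Proof.
change (\sum_(k < N.+1) summand n k = closed_form n).
rewrite (sum_vanishing_tail (summand n) hN (@summand_vanishing n)).
exact: series_closed_form.
Qed.
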